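(* If a graph $G$ has a $\gamma$-set $D$ such that $\gamma(G-x)>\gamma(G)$ for every $x\in D$, then $\gamma(G)=\gamma_{\rm cer}(G)$.
   Context: All graphs are finite and simple; $G-x$ denotes the graph obtained by deleting vertex $x$. A set $D\subseteq V_G$ is a dominating set of $G$ if every vertex of $V_G-D$ has a neighbor in $D$; $\gamma(G)$ is the minimum cardinality of a dominating set, and a $\gamma$-set is a dominating set of cardinality $\gamma(G)$. A set $D\subseteq V_G$ is a certified dominating set of $G$ if $D$ is a dominating set of $G$ and every vertex of $D$ has either zero or at least two neighbors in $V_G-D$; $\gamma_{\rm cer}(G)$ is the minimum cardinality of a certified dominating set of $G$. *)

(* A finite simple graph is a symmetric irreflexive relation
   [e] on a finType [T]. Domination is defined relative to a vertex set [V],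
   so that G - x is the subgraph induced by V :\ x. *)
From mathcomp Require Import all_boot.
Set Implicit Arguments. Unset Strict Implicit. Unset Printing Implicit Defensive.

Definition simple_graph (T : finType) (e : rel T) : Prop :=
  symmetric e /\ irreflexive e.

Definition nbhd (T : finType) (e : rel T) (V : {set T}) (v : T) : {set T} :=
  [set u in V | e v u].

Definition dominating (T : finType) (e : rel T) (V D : {set T}) : bool :=
  (D \subset V) && [forall v in V :\: D, [exists u in D, e v u]].

Definition certified_dominating (T : finType) (e : rel T) (V D : {set T}) : bool :=
  dominating e V D &&
  [forall v in D, (#|nbhd e (V :\: D) v| == 0) || (2 <= #|nbhd e (V :\: D) v|)].

Lemma dominating_self (T : finType) (e : rel T) (V : {set T}) : dominating e V V.
Proof.
  rewrite /dominating subxx /=; apply/forall_inP => v; by rewrite setDv inE.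
Qed.

Lemma certified_dominating_self (T : finType) (e : rel T) (V : {set T}) :
  certified_dominating e V V.
Proof.
  rewrite /certified_dominating dominating_self /=.
  apply/forall_inP => v _; apply/orP; left.
  rewrite cards_eq0; apply/eqP; apply/setP => u.
  by rewrite !inE andNb.
Qed.

Definition gamma (T : finType) (e : rel T) (V : {set T}) : nat :=
  #|[arg min_(D < V | dominating e V D) #|D|]|.

Definition gamma_cer (T : finType) (e : rel T) (V : {set T}) : nat :=
  #|[arg min_(D < V | certified_dominating e V D) #|D|]|.

(** If some vertex [v] of a minimum dominating set [D] had exactly one
    neighbour [u] outside [D], then [u] would take over the role of [v]:
    [(D - v) + u] dominates [G - v], so removing [v] would not raise the
    domination number.  Hence [D] is itself certified, giving
    [gamma_cer <= gamma]; the reverse inequality holds because every certified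
    dominating set is dominating. *)
From mathcomp Require Import all_boot.
Set Implicit Arguments. Unset Strict Implicit. Unset Printing Implicit Defensive.

Section Domination.

Variables (T : finType) (e : rel T).

Lemma gamma_min V D : dominating e V D -> gamma e V <= #|D|.
Proof.
move=> domD; rewrite /gamma.
by case: arg_minnP => [|A _ minA]; [exact: dominating_self | exact: minA].
Qed.

Lemma gamma_cer_min V D : certified_dominating e V D -> gamma_cer e V <= #|D|.
Proof.
move=> cerD; rewrite /gamma_cer.
by case: arg_minnP => [|A _ minA]; [exact: certified_dominating_self | exact: minA].
Qed.

Lemma gamma_cer_witness V :
  exists2 D, certified_dominating e V D & #|D| = gamma_cer e V.
Proof.
rewrite /gamma_cer.
by case: arg_minnP => [|A cerA _]; [exact: certified_dominating_self | exists A].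
Qed.

Lemma certified_dominatingW V D : certified_dominating e V D -> dominating e V D.
Proof. by case/andP. Qed.

Lemma gamma_le_gamma_cer V : gamma e V <= gamma_cer e V.
Proof.
have [D /certified_dominatingW domD <-] := gamma_cer_witness V.
exact: gamma_min.
Qed.

Hypothesis e_sym : symmetric e.

Lemma dominating_swap_private V D v u :
  dominating e V D -> v \in D -> nbhd e (V :\: D) v = [set u] ->
  dominating e (V :\ v) (u |: (D :\ v)).
Proof.
case/andP=> /subsetP DV /forall_inP domD vD Nv.
have : u \in nbhd e (V :\: D) v by rewrite Nv set11.
rewrite !inE => /andP [/andP [uD uV] _].
have uv : u != v by apply: contraNneq uD => ->.
apply/andP; split.
  apply/subsetP => w; rewrite !inE => /orP [/eqP -> | /andP [wv /DV wV]].
    by rewrite uv uV.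
  by rewrite wv.
apply/forall_inP => w; rewrite !inE negb_or negb_and negbK.
case/andP=> /andP [wu /orP [/eqP wv | wD]] /andP [wv' wV].
  by rewrite wv eqxx in wv'.
have /exists_inP [d dD ewd] : [exists d in D, e w d] by apply: domD; rewrite inE wD.
have dv : d != v.
  apply: contraNneq wu => dv; subst d.
  have : w \in nbhd e (V :\: D) v by rewrite !inE wD wV e_sym.
  by rewrite Nv inE.
by apply/exists_inP; exists d; rewrite // !inE dv dD orbT.
Qed.

Lemma critical_dominating_certified V D :
  dominating e V D -> (forall v, v \in D -> #|D| < gamma e (V :\ v)) ->
  certified_dominating e V D.
Proof.
move=> domD critD; rewrite /certified_dominating domD /=.
apply/forall_inP => v vD; set N := nbhd e (V :\: D) v.
case: (ltngtP #|N| 1) => [|_|one]; [by rewrite orbF ltnS leqn0 | by rewrite orbT |].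
have [u Nv] : exists u, N = [set u] by apply/cards1P; rewrite one.
have swap_card : #|u |: (D :\ v)| <= #|D|.
  by rewrite cardsU1 (cardsD1 v D) vD leq_add2r leq_b1.
have := leq_trans (gamma_min (dominating_swap_private domD vD Nv)) swap_card.
by rewrite leqNgt critD.
Qed.

End Domination.

Theorem corollary2p5 (T : finType) (e : rel T) :
  simple_graph e ->
  (exists D : {set T},
      dominating e [set: T] D /\ #|D| = gamma e [set: T] /\
      (forall x, x \in D -> gamma e [set: T] < gamma e ([set: T] :\ x))) ->
  gamma e [set: T] = gamma_cer e [set: T].
Proof.
move=> [e_sym _] [D [domD [cardD critD]]].
apply/eqP; rewrite eqn_leq gamma_le_gamma_cer -cardD.
apply: gamma_cer_min; apply: critical_dominating_certified => //.
by rewrite cardD.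
Qed.
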